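(* For all integers $1\le t\le n$, both the $t$-path ideal $I_t(L_n)$ and its Alexander dual $I_t(L_n)^{\vee}$ are normally torsion-free ideals of $S=K[x_1,\ldots,x_n]$.
   Context: $K$ is a field, $S=K[x_1,\ldots,x_n]$. $L_n$ is the line graph on vertices $x_1,\ldots,x_n$ with edges $\{x_j,x_{j+1}\}$, $j=1,\ldots,n-1$. The $t$-path ideal is $I_t(L_n)=(u_1,\ldots,u_{n-t+1})$ with $u_i=x_ix_{i+1}\cdots x_{i+t-1}$. For a squarefree monomial ideal $I$ whose minimal generators are $x_{G_1},\ldots,x_{G_m}$ (with $x_G=\prod_{i\in G}x_i$), the Alexander dual $I^\vee$ is the ideal generated by all $x_C$ with $C\subseteq[n]$ satisfying $C\cap G_j\ne\emptyset$ for all $j$ (vertex covers). An ideal $I$ is normally torsion-free if $\mathrm{Ass}(S/I^s)=\mathrm{Ass}(S/I)$ for all $s\ge1$. *)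

From HB Require Import structures.
From mathcomp Require Import all_boot all_order all_algebra.
From mathcomp Require Import mpoly.
Set Implicit Arguments. Unset Strict Implicit. Unset Printing Implicit Defensive.
Import GRing.Theory.
Local Open Scope ring_scope.

(* S = K[x_1,...,x_n] is {mpoly K[n]}; variable x_(j+1) is 'X_j, j : 'I_n. *)

Section Ideals.
Variables (K : fieldType) (n : nat).
Local Notation S := {mpoly K[n]}.

Definition pset := S -> Prop.

Definition ideal_gen (A : pset) : pset := fun p =>
  exists l : seq (S * S), (forall q, q \in l -> A q.2) /\
     p = \sum_(q <- l) q.1 * q.2.

Definition is_ideal (I : pset) : Prop :=
  [/\ I 0, (forall a b, I a -> I b -> I (a + b)) & (forall r a, I a -> I (r * a))].

Definition is_prime_ideal (P : pset) : Prop :=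
  [/\ is_ideal P, ~ P 1 & (forall a b, P (a * b) -> P a \/ P b)].

Definition ideal_mul (I J : pset) : pset :=
  ideal_gen (fun p => exists a b, [/\ I a, J b & p = a * b]).

Definition ideal_pow (I : pset) (s : nat) : pset :=
  iter s (ideal_mul I) (fun _ => True).

(* P \in Ass(S/J): P prime and P = (J : f) for some f in S *)
Definition is_assoc_prime (J P : pset) : Prop :=
  is_prime_ideal P /\ exists f : S, forall g, P g <-> J (g * f).

Definition normally_torsion_free (I : pset) : Prop :=
  forall s, (1 <= s)%N -> forall P : pset,
    is_assoc_prime (ideal_pow I s) P <-> is_assoc_prime I P.

Definition xmon (G : {set 'I_n}) : S := \prod_(j in G) 'X_j.

(* the t-path ideal I_t(L_n): generators u_i = x_i ... x_{i+t-1},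
   i = 1..n-t+1; 0-indexed: support G_i = {i, ..., i+t-1}, i = 0..n-t *)
Definition path_supp (t i : nat) : {set 'I_n} :=
  [set j : 'I_n | (i <= j < i + t)%N].

Definition path_ideal (t : nat) : pset :=
  ideal_gen (fun p => exists i, (i < n - t + 1)%N /\ p = xmon (path_supp t i)).

(* Alexander dual: generated by x_C for all vertex covers C *)
Definition path_cover (t : nat) (C : {set 'I_n}) : Prop :=
  forall i, (i < n - t + 1)%N -> C :&: path_supp t i != set0.

Definition path_ideal_dual (t : nat) : pset :=
  ideal_gen (fun p => exists C, path_cover t C /\ p = xmon C).

End Ideals.

(* A squarefree monomial ideal [I] whose minimal primes are the
   [P_C = (x_j : j \in C)], [C \in F], is normally torsion-free as soon as
   [I^s = \bigcap_(C \in F) P_C^s] for every [s]: each [P_C^s] is [P_C]-primary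
   (the lowest [C]-degree parts of two polynomials multiply to a nonzero
   polynomial), so [Ass(S/I^s)] consists of the [P_C] with [C] minimal in [F],
   whatever [s].
   For [I_t(L_n)], [F] is the set of vertex covers of the paths; a monomial of
   [C]-degree at least [s] on every cover splits off the leftmost path on which
   it is positive and keeps [C]-degree at least [s - 1] everywhere. For the dual,
   [F] is the set of paths; a monomial of degree at least [s] on every path is
   split into [s] vertex covers by laying its exponents end to end on the
   integers and sorting the units by their residue modulo [s]. *)

From HB Require Import structures.
From mathcomp Require Import all_boot all_order all_algebra.
From mathcomp Require Import mpoly.
From mathcomp Require Import zify.
From Stdlib Require Import Classical ClassicalEpsilon.
From Stdlib Require Import FunctionalExtensionality PropExtensionality.
Set Implicit Arguments. Unset Strict Implicit. Unset Printing Implicit Defensive.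
Import GRing.Theory.

Lemma lepm_add2r n (m1 m2 m : 'X_{1..n}) : (m1 <= m2)%MM -> (m1 + m <= m2 + m)%MM.
Proof. by move/mnm_lepP=> le; apply/mnm_lepP=> i; rewrite !mnmDE leq_add2r. Qed.

Lemma pset_ext (K : fieldType) n (A B : pset K n) : (forall p, A p <-> B p) -> A = B.
Proof.
by move=> AB; apply: functional_extensionality => p; apply: propositional_extensionality.
Qed.

Section MonomialIdeals.
Local Open Scope ring_scope.
Variables (K : fieldType) (n : nat).
Local Notation S := {mpoly K[n]}.
Implicit Types (p q : S) (m : 'X_{1..n}) (M : 'X_{1..n} -> Prop) (A J : pset K n).

Definition mon_ideal M : pset K n := fun p => forall m, m \in msupp p -> M m.

Definition upward_closed M := forall m m', M m -> (m <= m')%MM -> M m'.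

Lemma ideal_sum J (I : Type) (r : seq I) (P : pred I) (F : I -> S) :
  is_ideal J -> (forall i, P i -> J (F i)) -> J (\sum_(i <- r | P i) F i).
Proof. by case=> J0 JD _ JF; elim/big_ind: _. Qed.

Lemma ideal_gen_ideal A : is_ideal (ideal_gen A).
Proof.
split.
- by exists [::]; rewrite big_nil.
- move=> a b [la [Ha ->]] [lb [Hb ->]]; exists (la ++ lb); split; last by rewrite big_cat.
  by move=> q; rewrite mem_cat => /orP[/Ha|/Hb].
- move=> r a [la [Ha ->]]; exists [seq (r * q.1, q.2) | q : S * S <- la]; split.
    by move=> q /mapP [q' /Ha Aq' ->].
  by rewrite big_map mulr_sumr; apply: eq_bigr => q _; rewrite mulrA.
Qed.

Lemma ideal_gen_mem A p : A p -> ideal_gen A p.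
Proof.
move=> Ap; exists [:: (1, p)]; rewrite big_seq1 mul1r; split=> //.
by move=> q; rewrite inE => /eqP ->.
Qed.

Lemma ideal_gen_min A J p : is_ideal J -> (forall q, A q -> J q) -> ideal_gen A p -> J p.
Proof.
move=> iJ AJ [l [Al ->]]; rewrite big_seq_cond; apply: ideal_sum => // q /andP[ql _].
by case: iJ => _ _ JM; apply/JM/AJ/Al.
Qed.

Lemma mon_ideal_ideal M : upward_closed M -> is_ideal (mon_ideal M).
Proof.
move=> upM; split.
- by move=> m; rewrite msupp0.
- by move=> a b Ma Mb m /msuppD_le; rewrite mem_cat => /orP[/Ma|/Mb].
- move=> r a Ma m /msuppM_le /allpairsP [[m1 m2] /= [_ m2a ->]].
  exact: upM (Ma _ m2a) (lem_addl m1 m2).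
Qed.

Lemma mon_idealX M m : mon_ideal M 'X_[m] <-> M m.
Proof.
split; first by apply; rewrite msuppX mem_seq1.
by move=> Mm m'; rewrite msuppX mem_seq1 => /eqP ->.
Qed.

Lemma mon_ideal_min M J p :
  is_ideal J -> (forall m, M m -> J 'X_[m]) -> mon_ideal M p -> J p.
Proof.
move=> iJ MJ Mp; rewrite (mpolyE p) big_seq_cond; apply: ideal_sum => // m /andP[mp _].
by rewrite -mul_mpolyC; case: iJ => _ _ JM; apply/JM/MJ/Mp.
Qed.

Lemma ideal_mpolyX_dvd J m m' :
  is_ideal J -> J 'X_[m] -> (m <= m')%MM -> J 'X_[m'].
Proof. by case=> _ _ JM Jm /submK <-; rewrite mpolyXD; apply: JM. Qed.

Definition gen_ideal (Gen : 'X_{1..n} -> Prop) : pset K n :=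
  ideal_gen (fun p => exists2 g, Gen g & p = 'X_[g]).

Lemma gen_idealX Gen g : Gen g -> gen_ideal Gen 'X_[g].
Proof. by move=> Gg; apply: ideal_gen_mem; exists g. Qed.

Fixpoint dvd_gen_prod (Gen : 'X_{1..n} -> Prop) (s : nat) m : Prop :=
  if s is s'.+1 then exists g m', [/\ Gen g, dvd_gen_prod Gen s' m' & (g + m' <= m)%MM]
  else True.

Lemma dvd_gen_prod_up Gen s : upward_closed (dvd_gen_prod Gen s).
Proof.
case: s => [//|s] m m' [g [m2 [Gg Pm2 le]]] le'.
by exists g, m2; split=> //; apply: lepm_trans le le'.
Qed.

Lemma dvd_gen_prod_seq Gen (l : seq 'X_{1..n}) m :
  (forall g, g \in l -> Gen g) -> (\sum_(g <- l) g <= m)%MM -> dvd_gen_prod Gen (size l) m.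
Proof.
elim: l m => [//|g l IH] m lGen le /=; exists g, (\sum_(g <- l) g)%MM; split.
- by apply: lGen; rewrite mem_head.
- by apply: IH (lepm_refl _) => g' g'l; apply: lGen; rewrite inE g'l orbT.
- by rewrite big_cons in le.
Qed.

Lemma gen_idealE Gen p : gen_ideal Gen p <-> mon_ideal (dvd_gen_prod Gen 1) p.
Proof.
split.
- apply: ideal_gen_min; first exact/mon_ideal_ideal/dvd_gen_prod_up.
  move=> _ [g Gg ->]; apply/mon_idealX; exists g, 0%MM.
  by rewrite addm0; split=> //; apply: lepm_refl.
- apply: mon_ideal_min; first exact: ideal_gen_ideal.
  move=> m [g [m' [Gg _ le]]].
  apply: ideal_mpolyX_dvd (ideal_gen_ideal _) (gen_idealX Gg) _.
  exact: lepm_trans (lem_addr g m') le.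
Qed.

Lemma ideal_mul_gen_ideal Gen M J : upward_closed M ->
  (forall p, J p <-> mon_ideal M p) ->
  forall p, ideal_mul (gen_ideal Gen) J p <->
    mon_ideal (fun m => exists g m', [/\ Gen g, M m' & (g + m' <= m)%MM]) p.
Proof.
move=> upM JM p; split.
- apply: ideal_gen_min.
    apply: mon_ideal_ideal => m m' [g [m2 [Gg Mm2 le]]] le'.
    by exists g, m2; split=> //; apply: lepm_trans le le'.
  move=> _ [a [b [/gen_idealE Ga /JM Mb ->]]] m.
  move=> /msuppM_le /allpairsP [[m1 m2] /= [m1a m2b ->]].
  have [g [m' [Gg _ le]]] := Ga _ m1a.
  exists g, m2; split; [done | exact: Mb |].
  exact/lepm_add2r/(lepm_trans (lem_addr g m') le).
- apply: mon_ideal_min; first exact: ideal_gen_ideal.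
  move=> m [g [m' [Gg Mm' le]]].
  apply: (ideal_mpolyX_dvd (m := (g + m')%MM) (ideal_gen_ideal _) _ le).
  apply: ideal_gen_mem; exists 'X_[g], 'X_[m']; rewrite -mpolyXD; split=> //.
    exact: gen_idealX.
  exact/JM/mon_idealX.
Qed.

Lemma ideal_pow_gen_idealE Gen s p :
  ideal_pow (gen_ideal Gen) s p <-> mon_ideal (dvd_gen_prod Gen s) p.
Proof.
elim: s p => [|s IH] p; first by split=> // _ m.
rewrite /ideal_pow iterS -/(ideal_pow _ s).
exact: (ideal_mul_gen_ideal _ (@dvd_gen_prod_up Gen s) IH).
Qed.

End MonomialIdeals.

Section DegreeOn.
Variable n : nat.
Implicit Types (m : 'X_{1..n}) (C D G : {set 'I_n}).

Definition deg_on D m : nat := \sum_(j in D) m j.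

Lemma deg_onD D m1 m2 : deg_on D (m1 + m2)%MM = deg_on D m1 + deg_on D m2.
Proof. by rewrite /deg_on -big_split; apply: eq_bigr => j _; rewrite mnmDE. Qed.

Lemma deg_on_le D m1 m2 : (m1 <= m2)%MM -> deg_on D m1 <= deg_on D m2.
Proof. by move/mnm_lepP => le; apply: leq_sum => j _. Qed.

Lemma deg_on_subset D' D m : D' \subset D -> deg_on D' m <= deg_on D m.
Proof.
move=> sD'D; rewrite /deg_on [leqRHS](big_setID D') /= (setIidPr sD'D).
exact: leq_addr.
Qed.

Lemma deg_on_ge D m j : j \in D -> m j <= deg_on D m.
Proof. by move=> jD; rewrite /deg_on (bigD1 j) //= leq_addr. Qed.

Lemma deg_on_gt0 D m : 0 < deg_on D m -> exists2 j, j \in D & 0 < m j.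
Proof.
move=> pos; have [/existsP [j /andP[jD mj]]|] := boolP [exists j in D, 0 < m j].
  by exists j.
rewrite negb_exists => /forallP m0; move: pos; rewrite /deg_on big1 // => j jD.
by apply/eqP; move: (m0 j); rewrite jD -eqn0Ngt.
Qed.

Lemma deg_on0 D : deg_on D 0%MM = 0.
Proof. by rewrite /deg_on big1 // => j _; rewrite mnm0E. Qed.

Lemma deg_on1 D a : deg_on D U_(a)%MM = (a \in D).
Proof.
rewrite /deg_on; have [aD|aD] := boolP (a \in D).
  rewrite (big_setD1 a) //= mnm1E eqxx big1 // => j; rewrite !inE => /andP[ja _].
  by rewrite mnm1E eq_sym (negbTE ja).
rewrite big1 // => j jD; rewrite mnm1E; case: eqP => // aj.
by rewrite aj jD in aD.
Qed.

Lemma deg_onU C D m : deg_on (C :|: D) m <= deg_on C m + deg_on D m.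
Proof.
rewrite /deg_on (big_setID C) /= setUK setDUl setDv set0U leq_add2l.
exact: (deg_on_subset m (subsetDl D C)).
Qed.

Lemma deg_on_set1 j m : deg_on [set j] m = m j.
Proof. by rewrite /deg_on big_set1. Qed.

Definition mnm_of_set G : 'X_{1..n} := [multinom (j \in G : nat) | j < n].

Lemma deg_on_mnm_of_set_gt0 D G j :
  j \in D -> j \in G -> 0 < deg_on D (mnm_of_set G).
Proof. by move=> jD jG; apply: leq_trans (deg_on_ge _ jD); rewrite mnmE jG. Qed.

Lemma dvd_gen_prod_deg_on (Gen : 'X_{1..n} -> Prop) C s m :
  (forall g, Gen g -> 0 < deg_on C g) -> dvd_gen_prod Gen s m -> s <= deg_on C m.
Proof.
move=> GenC; elim: s m => [//|s IH] m [g [m' [Gg m's le]]].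
apply: leq_trans (deg_on_le C le); rewrite deg_onD -add1n.
exact: leq_add (GenC g Gg) (IH m' m's).
Qed.

Lemma deg_on_zero_set m : deg_on [set j | m j == 0] m = 0.
Proof. by rewrite /deg_on big1 // => j; rewrite inE => /eqP. Qed.

Lemma deg_on_submnm C G m c : c \in C :&: G ->
  (m c).-1 + deg_on (C :\: G) m <= deg_on C (m - mnm_of_set G)%MM.
Proof.
move=> cCG; rewrite [leqRHS](big_setID G) /= leq_add //.
  by apply: leq_trans (deg_on_ge _ cCG); rewrite mnmBE mnmE (setIP cCG).2 subn1.
apply/eq_leq/eq_bigr => j.
by rewrite inE => /andP[jG _]; rewrite mnmBE mnmE (negbTE jG) subn0.
Qed.

End DegreeOn.

Section VarIdealPow.
Local Open Scope ring_scope.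
Variables (K : fieldType) (n : nat).
Local Notation S := {mpoly K[n]}.
Implicit Types (p q : S) (m : 'X_{1..n}) (D : {set 'I_n}).

(* The power [P_D ^ s] of the prime [P_D = (x_j : j \in D)]. *)
Definition var_ideal_pow D s : pset K n := mon_ideal (fun m => s <= deg_on D m)%N.

Lemma var_ideal_pow_ideal D s : is_ideal (var_ideal_pow D s).
Proof. by apply: mon_ideal_ideal => m m' sm /(deg_on_le D); apply: leq_trans. Qed.

Lemma var_ideal_pow_mull D s p q : var_ideal_pow D s q -> var_ideal_pow D s (p * q).
Proof. by case: (var_ideal_pow_ideal D s) => _ _; apply. Qed.

Lemma var_ideal_powX D s m : var_ideal_pow D s 'X_[m] <-> (s <= deg_on D m)%N.
Proof. exact: mon_idealX. Qed.

Definition mfilter (P : pred 'X_{1..n}) p : S := \sum_(m <- msupp p | P m) p@_m *: 'X_[m].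

Lemma mfilter_split P p : p = mfilter P p + mfilter (predC P) p.
Proof. by rewrite {1}(mpolyE p) (bigID P). Qed.

Lemma msupp_mfilter P p m : (m \in msupp (mfilter P p)) = P m && (m \in msupp p).
Proof.
rewrite /mfilter -big_filter (perm_mem (msupp_sumX _ _)) ?mem_filter //.
  exact/filter_uniq/msupp_uniq.
by move=> m'; rewrite mem_filter mcoeff_msupp => /andP[].
Qed.

Lemma msuppM_decomp p q m : m \in msupp (p * q) ->
  exists m1 m2, [/\ m1 \in msupp p, m2 \in msupp q & m = (m1 + m2)%MM].
Proof. by move/msuppM_le/allpairsP => [[m1 m2] /= [? ? ->]]; exists m1, m2. Qed.

Lemma lowest_deg_on_term D p m0 : m0 \in msupp p ->
  exists b, [/\ (forall m, m \in msupp p -> b <= deg_on D m)%N,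
    exists2 mb, mb \in msupp p & deg_on D mb = b & (b <= deg_on D m0)%N].
Proof.
move=> m0p; have ex : exists b, has (fun m => deg_on D m == b) (msupp p).
  by exists (deg_on D m0); apply/hasP; exists m0.
have [b /hasP [mb mbp /eqP dmb] minb] := ex_minnP ex.
exists b; split; last by apply/minb/hasP; exists m0.
  by move=> m mp; apply/minb/hasP; exists m.
by exists mb.
Qed.

(* The lowest [D]-degree components of [p] and [q] multiply to a nonzero
   polynomial, and no other pair of components reaches that degree. *)
Lemma lowest_deg_on_mul D p q a b :
  (forall m, m \in msupp p -> a <= deg_on D m)%N ->
  (exists2 ma, ma \in msupp p & deg_on D ma = a) ->
  (forall m, m \in msupp q -> b <= deg_on D m)%N ->
  (exists2 mb, mb \in msupp q & deg_on D mb = b) ->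
  exists2 m, m \in msupp (p * q) & deg_on D m = (a + b)%N.
Proof.
move=> pa [ma map dma] qb [mb mbq dmb].
pose Pa m := deg_on D m == a; pose Pb m := deg_on D m == b.
set p0 := mfilter Pa p; set p1 := mfilter (predC Pa) p.
set q0 := mfilter Pb q; set q1 := mfilter (predC Pb) q.
have pqE : p * q = p0 * q0 + (p0 * q1 + p1 * q).
  by rewrite addrA -mulrDr -mfilter_split -mulrDl -mfilter_split.
have p0q0_neq0 : p0 * q0 != 0.
  apply: mulf_neq0; apply/eqP.
    move/(congr1 (fun r : S => ma \in msupp r)).
    by rewrite msupp_mfilter msupp0 /Pa dma eqxx map.
  move/(congr1 (fun r : S => mb \in msupp r)).
  by rewrite msupp_mfilter msupp0 /Pb dmb eqxx mbq.
set m := mlead (p0 * q0); have mp0q0 : m \in msupp (p0 * q0) by exact: mlead_supp.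
have dm : deg_on D m = (a + b)%N.
  have [m1 [m2 [m1p m2q ->]]] := msuppM_decomp mp0q0.
  move: m1p m2q; rewrite !msupp_mfilter => /andP[/eqP d1 _] /andP[/eqP d2 _].
  by rewrite deg_onD d1 d2.
have rest0 : (p0 * q1 + p1 * q)@_m = 0.
  apply/eqP; rewrite mcoeff_eq0; apply/negP => /msuppD_le; rewrite mem_cat.
  case/orP => /msuppM_decomp [m1 [m2 [m1p m2q mE]]]; move: dm;
    rewrite mE deg_onD; move: m1p m2q; rewrite !msupp_mfilter /=.
  - by case/andP=> /eqP -> _ /andP[/negP nb _] /addnI/eqP.
  - case/andP=> na /pa le1 /qb le2 /eqP; rewrite eqn_leq => /andP[le _].
    have lt1 : (a < deg_on D m1)%N by rewrite ltn_neqAle eq_sym na le1.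
    by move: (leq_add lt1 le2); rewrite addSn ltnNge le.
by exists m => //; rewrite mcoeff_msupp pqE mcoeffD rest0 addr0 -mcoeff_msupp.
Qed.

Lemma var_ideal_pow_primary D s p q :
  var_ideal_pow D s (p * q) -> ~ var_ideal_pow D s q -> var_ideal_pow D 1 p.
Proof.
move=> pqs qNs m mp; rewrite lt0n; apply/negP => /eqP dm0.
apply: qNs => m1 m1q; rewrite leqNgt; apply/negP => lt1.
have [b [qb [mb mbq dmb] leb]] := lowest_deg_on_term D m1q.
have [m' m'pq dm'] := lowest_deg_on_mul (a := 0%N) (fun m _ => leq0n _)
  (ex_intro2 _ _ m mp dm0) qb (ex_intro2 _ _ mb mbq dmb).
by move/pqs: m'pq; rewrite dm' add0n => /leq_trans/(_ leb); rewrite leqNgt lt1.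
Qed.

Lemma var_ideal_prime D : is_prime_ideal (var_ideal_pow D 1).
Proof.
split; first exact: var_ideal_pow_ideal.
  by rewrite -mpolyX0 => /var_ideal_powX; rewrite deg_on0.
move=> x y xy; have [|] := classic (var_ideal_pow D 1 y); first by right.
by move/(var_ideal_pow_primary xy); left.
Qed.

End VarIdealPow.

Section AssocPrimes.
Local Open Scope ring_scope.
Variables (K : fieldType) (n : nat).
Local Notation S := {mpoly K[n]}.
Variables (F : {set 'I_n} -> Prop) (s : nat) (J : pset K n).
Hypotheses (s_gt0 : (0 < s)%N) (F_neq0 : forall C, F C -> C != set0).
Hypothesis JE : forall p, J p <-> forall C, F C -> var_ideal_pow C s p.
Implicit Types (p f g : S) (D : {set 'I_n}) (P : pset K n).

Definition minimal_in D := F D /\ forall D', F D' -> D' \subset D -> D' = D.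

Lemma prime_notin_mpolyX P (A : {set 'I_n}) k :
  is_prime_ideal P -> (forall a, a \in A -> ~ P 'X_a) ->
  ~ P 'X_[[multinom (if i \in A then k else 0%N) | i < n]].
Proof.
case=> _ P1 Pprime AP; rewrite mpolyXE_id; apply: (big_ind (fun x => ~ P x)) => //.
  by move=> x y Px Py /Pprime [].
move=> i _; rewrite mnmE; case: ifP => [/AP iP | _]; last by rewrite expr0.
by elim: k => [|k IH]; rewrite ?expr0 // exprS => /Pprime [].
Qed.

Section Colon.
Variables (P : pset K n) (f : S).
Hypotheses (Pprime : is_prime_ideal P) (Pf : forall g, P g <-> J (g * f)).

Lemma colon_prime_vars :
  exists D, [/\ F D, ~ var_ideal_pow D s f & forall a, a \in D -> P 'X_a].
Proof.
apply: NNPP => noD.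
pose A := [set a : 'I_n | if excluded_middle_informative (P 'X_a) then false else true].
have inA a : a \in A <-> ~ P 'X_a by rewrite inE; case: excluded_middle_informative.
apply: (prime_notin_mpolyX (k := s) Pprime (fun a => proj1 (inA a))).
apply/Pf/JE => C FC; have [Cf|Cf] := classic (var_ideal_pow C s f).
  exact: var_ideal_pow_mull.
have [a aC aA] : exists2 a, a \in C & a \in A.
  apply: NNPP => noa; apply: noD; exists C; split=> // a aC.
  by apply: NNPP => /inA aA; apply: noa; exists a.
rewrite mulrC; apply/var_ideal_pow_mull/var_ideal_powX.
by apply: leq_trans (deg_on_ge _ aC); rewrite mnmE aA.
Qed.

Lemma colon_prime_sub D g : F D -> ~ var_ideal_pow D s f -> P g -> var_ideal_pow D 1 g.
Proof. by move=> FD Df /Pf /JE /(_ D FD) /var_ideal_pow_primary; apply. Qed.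

Lemma colon_primeE : exists D, minimal_in D /\ P = var_ideal_pow D 1.
Proof.
have [D [FD Df DP]] := colon_prime_vars.
have PE : P = var_ideal_pow D 1.
  apply: pset_ext => g; split; first exact: colon_prime_sub.
  apply: mon_ideal_min; first by case: Pprime.
  move=> m /deg_on_gt0 [a aD ma]; apply: ideal_mpolyX_dvd (DP a aD) _.
    by case: Pprime.
  by rewrite lep1mP -lt0n.
exists D; split=> //; split=> // D' FD' D'D.
have [D'f|D'f] := classic (var_ideal_pow D' s f).
  by case: Df => m /D'f /leq_trans; apply; apply: deg_on_subset.
apply/eqP; rewrite eqEsubset D'D; apply/subsetP => a aD.
have /var_ideal_powX := colon_prime_sub FD' D'f (DP a aD).
by rewrite deg_on1; case: (a \in D').
Qed.

End Colon.

Lemma minimal_colon D : minimal_in D -> exists f,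
  forall g, var_ideal_pow D 1 g <-> J (g * f).
Proof.
case=> FD minD; have [a aD] := set0Pn _ (F_neq0 FD).
pose mf : 'X_{1..n} :=
  [multinom (if i \in D then (if i == a then s.-1 else 0) else s)%N | i < n].
have dmf : deg_on D mf = s.-1.
  rewrite /deg_on (bigD1 a) //= mnmE aD eqxx big1 ?addn0 // => j /andP[jD ja].
  by rewrite mnmE jD (negbTE ja).
(* [x^mf] misses [P_D^s] by one degree but lies in every other [P_C^s], since by
   minimality [C] has a vertex outside [D]. *)
exists 'X_[mf] => g; split.
- move=> Dg; apply/JE => C FC; have [->|CD] := eqVneq C D.
    move=> m /msuppM_decomp [m1 [m2 [/Dg m1D]]]; rewrite msuppX mem_seq1 => /eqP -> ->.
    by rewrite deg_onD dmf -(prednK s_gt0) -add1n leq_add2r.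
  have [j jC jD] : exists2 j, j \in C & j \notin D.
    by apply/subsetPn/negP => CsD; move: CD; rewrite (minD C FC CsD) eqxx.
  apply/var_ideal_pow_mull/var_ideal_powX.
  by apply: leq_trans (deg_on_ge _ jC); rewrite mnmE (negbTE jD).
- move/JE => /(_ D FD) /var_ideal_pow_primary; apply.
  by move/var_ideal_powX; rewrite dmf -(prednK s_gt0) ltnn.
Qed.

Lemma assoc_primes_intersection P :
  is_assoc_prime J P <-> exists D, minimal_in D /\ P = var_ideal_pow D 1.
Proof.
split; first by case=> Pprime [f Pf]; apply: colon_primeE Pf.
case=> D [minD ->]; split; first exact: var_ideal_prime.
exact: minimal_colon.
Qed.

End AssocPrimes.

Section PathIdeal.
Variables n t : nat.
Implicit Types (m : 'X_{1..n}) (C G : {set 'I_n}).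

Definition path_gen m := exists2 i, i < n - t + 1 & m = mnm_of_set (path_supp n t i).

Definition path_window_pos m i := (i < n - t + 1) && [forall j in path_supp n t i, 0 < m j].

Lemma exists_path_window_pos m : (forall C, path_cover t C -> 0 < deg_on C m) ->
  exists i, path_window_pos m i.
Proof.
move=> covm; have [/existsP [i ipos]|nopos] :=
  boolP [exists i : 'I_(n - t + 1), [forall j in path_supp n t i, 0 < m j]].
  by exists i; rewrite /path_window_pos ltn_ord.
suff /covm : path_cover t [set j | m j == 0] by rewrite deg_on_zero_set.
move=> i lti; apply/set0Pn.
move: nopos; rewrite negb_exists => /forallP /(_ (Ordinal lti)).
rewrite negb_forall => /existsP [j]; rewrite negb_imply -eqn0Ngt => /andP[ji mj].
by exists j; rewrite in_setI ji inE mj.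
Qed.

(* Greedy step: window [i] is the leftmost one on which [m] is positive and [c]
   the rightmost vertex of [C] in it; windows further left meet the zero set of
   [m], and windows further right that meet [C] inside window [i] contain [c]. *)
Lemma path_cover_shift m i C c :
  (forall l, path_window_pos m l -> i <= l) -> path_cover t C ->
  c \in C :&: path_supp n t i -> (forall j, j \in C :&: path_supp n t i -> j <= c) ->
  path_cover t ((C :\: path_supp n t i) :|: [set j | m j == 0] :|: [set c]).
Proof.
move=> mini covC cCG cmax l ltl; apply/set0Pn.
have [li|il] := ltnP l i.
  have : ~~ path_window_pos m l by apply: contraTN li => /mini; rewrite -leqNgt.
  rewrite /path_window_pos ltl negb_forall => /existsP [z].
  rewrite negb_imply -eqn0Ngt => /andP[zl mz].
  by exists z; rewrite in_setI zl !inE mz orbT.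
have [p /setIP [pC pl]] := set0Pn _ (covC l ltl).
have [pG|pG] := boolP (p \in path_supp n t i); last first.
  by exists p; rewrite in_setI pl !in_setU in_setD pC pG.
have pc : p <= c by apply: cmax; rewrite in_setI pC pG.
exists c; rewrite !inE eqxx orbT /=.
move: pl (setIP cCG).2 pG; rewrite !inE => /andP[lp pl] /andP[ic ci] /andP[ip pi]; lia.
Qed.

Lemma path_pow_decomp s m :
  dvd_gen_prod path_gen s m <-> forall C, path_cover t C -> s <= deg_on C m.
Proof.
split.
  move=> dvdm C covC; apply: dvd_gen_prod_deg_on dvdm => _ [i lti ->].
  have [j /setIP [jC ji]] := set0Pn _ (covC i lti).
  exact: deg_on_mnm_of_set_gt0 jC ji.
elim: s m => [//|s IH] m covm.
have [i /andP[lti /forallP ipos] mini] :=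
  ex_minnP (exists_path_window_pos (fun C covC => leq_trans (ltn0Sn s) (covm C covC))).
set G := path_supp n t i.
have Gm : (mnm_of_set G <= m)%MM.
  apply/mnm_lepP => j; rewrite mnmE; have [jG|//] := boolP (j \in G).
  by move/implyP: (ipos j); apply.
exists (mnm_of_set G), (m - mnm_of_set G)%MM; split.
- by exists i.
- apply: IH => C covC.
  have [c0 c0CG] := set0Pn _ (covC i lti).
  have [c cCG cmax] := arg_maxnP (fun j : 'I_n => val j) c0CG.
  have covC' := path_cover_shift mini covC cCG cmax.
  have mc : 0 < m c by move/implyP: (ipos c); apply; exact: (setIP cCG).2.
  have degC' : s < deg_on (C :\: G) m + m c.
    apply: leq_trans (covm _ covC') _; apply: leq_trans (deg_onU _ _ m) _.
    rewrite deg_on_set1 leq_add2r; apply: leq_trans (deg_onU _ _ m) _.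
    by rewrite deg_on_zero_set addn0.
  have := deg_on_submnm m cCG; rewrite -/G; lia.
- by rewrite addmC submK // lepm_refl.
Qed.

End PathIdeal.

Lemma nondecreasing_crossing (f : nat -> nat) a b u : (forall j, f j <= f j.+1) ->
  f a <= u -> u < f b -> exists j, [/\ a <= j, j < b, f j <= u & u < f j.+1].
Proof.
move=> fS; have fmono := homo_leq leqnn (fun y x z => @leq_trans y x z) fS.
elim: b => [|b IH] fa ub; first by have := fmono 0 a (leq0n a); lia.
have [ub'|bu] := ltnP u (f b).
  by have [j [aj jb fj uj]] := IH fa ub'; exists j; split=> //; lia.
exists b; split=> //; have [//|ba] := leqP a b; have := fmono b.+1 a ba; lia.
Qed.

Section ResidueClasses.
Variables (n t : nat) (m : 'X_{1..n}).

Definition psum j := \sum_(l < n | l < j) m l.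

Lemma psum_split a b : a <= b -> psum b = psum a + \sum_(l < n | a <= l < b) m l.
Proof.
move=> ab; rewrite /psum [in RHS]big_mkcond [X in _ + X]big_mkcond -big_split big_mkcond.
by apply: eq_bigr => l _; case: (ltnP l a) => la; case: (ltnP l b) => lb /=; lia.
Qed.

Lemma psumS j (ltjn : j < n) : psum j.+1 = psum j + m (Ordinal ltjn).
Proof.
rewrite (psum_split (leqnSn j)) (big_pred1 (Ordinal ltjn)) // => l /=.
by apply/andP/eqP => [[jl lj]|->//]; apply: val_inj => /=; lia.
Qed.

Lemma psum_mono j : psum j <= psum j.+1.
Proof. by rewrite (psum_split (leqnSn j)) leq_addr. Qed.

(* Lay the exponents of [m] end to end on the line of integers, vertex [j]
   occupying the block [psum j, psum j + m j); the [k]-th residue class collects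
   the vertices whose block contains an integer congruent to [k] modulo [s]. *)
Definition residue_class s k :=
  [set j : 'I_n | has (fun u => u %% s == k) (iota (psum j) (m j))].

Lemma residue_class_cover s k : t <= n -> k < s ->
  (forall i, i < n - t + 1 -> s <= deg_on (path_supp n t i) m) ->
  path_cover t (residue_class s k).
Proof.
move=> tn ks degm i lti; apply/set0Pn.
have window : psum i + s <= psum (i + t).
  rewrite (psum_split (leq_addr t i)) leq_add2l.
  by apply: leq_trans (degm i lti) _; rewrite /deg_on; under eq_bigl => l do rewrite inE.
set q := psum i %/ s; set r := psum i %% s.
have Pq : psum i = q * s + r by rewrite [LHS](divn_eq _ s).
have rs : r < s by rewrite ltn_mod; lia.
pose u := if r <= k then q * s + k else q.+1 * s + k.
have umod : u %% s = k by rewrite /u; case: ifP => _; rewrite modnMDl modn_small.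
have iu : psum i <= u by rewrite /u Pq; case: ifP; rewrite ?mulSn; lia.
have ut : u < psum (i + t).
  by apply: leq_trans window; rewrite /u Pq; case: ifP; rewrite ?mulSn; lia.
have [j [ij jit ju uj]] := nondecreasing_crossing psum_mono iu ut.
have jn : j < n by lia.
exists (Ordinal jn); rewrite !inE /= ij jit !andbT.
apply/hasP; exists u; last by rewrite umod.
by rewrite mem_iota ju -psumS.
Qed.

Lemma sum_residue_classes_le s :
  (\sum_(k <- iota 0 s) mnm_of_set (residue_class s k) <= m)%MM.
Proof.
apply/mnm_lepP => j; rewrite mnm_sumE; set r := iota (psum j) (m j).
apply: (@leq_trans (\sum_(k <- iota 0 s) \sum_(u <- r) (u %% s == k))).
  apply: leq_sum => k _; rewrite mnmE inE; case: hasP => [[u ur uk]|//].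
  by rewrite (big_rem u ur) /= uk leq_addr.
rewrite exchange_big /= -[leqRHS](size_iota (psum j)) -sum1_size; apply: leq_sum => u _.
rewrite (eq_bigr (fun k => if u %% s == k then 1 else 0)) // -big_mkcond sum1_count.
rewrite (eq_count (a2 := pred1 (u %% s))) => [|k]; last by rewrite /= eq_sym.
by rewrite count_uniq_mem ?iota_uniq ?leq_b1.
Qed.

End ResidueClasses.

Section DualPathIdeal.
Variables n t : nat.

Definition path_window (W : {set 'I_n}) := exists2 i, i < n - t + 1 & W = path_supp n t i.

Definition cover_gen (g : 'X_{1..n}) := exists2 C, path_cover t C & g = mnm_of_set C.

Lemma dual_pow_decomp s m : t <= n ->
  dvd_gen_prod cover_gen s m <-> forall W, path_window W -> s <= deg_on W m.
Proof.
move=> tn; split.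
  move=> dvdm W [i lti ->]; apply: dvd_gen_prod_deg_on dvdm => _ [C covC ->].
  have [j /setIP [jC ji]] := set0Pn _ (covC i lti).
  exact: deg_on_mnm_of_set_gt0 ji jC.
move=> degm; rewrite -[s](size_iota 0).
rewrite -(size_map (fun k => mnm_of_set (residue_class m s k))).
apply: dvd_gen_prod_seq; last by rewrite big_map; exact: sum_residue_classes_le.
move=> g /mapP [k]; rewrite mem_iota => /andP[_ ks] ->; exists (residue_class m s k) => //.
by apply: residue_class_cover tn ks _ => i lti; apply: degm; exists i.
Qed.

End DualPathIdeal.

Lemma ntf_of_power_decomp (K : fieldType) n (Gen : 'X_{1..n} -> Prop)
    (F : {set 'I_n} -> Prop) (I : pset K n) :
  (forall C, F C -> C != set0) ->
  (forall s m, dvd_gen_prod Gen s m <-> forall C, F C -> s <= deg_on C m) ->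
  I = gen_ideal Gen -> normally_torsion_free I.
Proof.
move=> F_neq0 decomp ->.
have powE s (p : {mpoly K[n]}) :
    ideal_pow (gen_ideal Gen) s p <-> forall C, F C -> var_ideal_pow C s p.
  rewrite ideal_pow_gen_idealE; split.
  - by move=> dvdp C FC m /dvdp /decomp; apply.
  - by move=> Cp m mp; apply/decomp => C FC; apply: Cp.
have genE (p : {mpoly K[n]}) : gen_ideal Gen p <-> forall C, F C -> var_ideal_pow C 1 p.
  by rewrite gen_idealE -ideal_pow_gen_idealE powE.
move=> s s_gt0 P; rewrite (assoc_primes_intersection s_gt0 F_neq0 (powE s)).
by rewrite (assoc_primes_intersection (ltnSn 0) F_neq0 genE).
Qed.

Section PathIdeals.
Variables (K : fieldType) (n t : nat).

Lemma xmonE (G : {set 'I_n}) : xmon K G = 'X_[mnm_of_set G].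
Proof.
rewrite /xmon mprodXE; congr 'X_[_]; apply/mnmP => i; rewrite mnm_sumE mnmE.
have [iG|iG] := boolP (i \in G).
  rewrite (bigD1 i) //= mnm1E eqxx big1 ?addn0 // => j /andP[_ ji].
  by rewrite mnm1E (negbTE ji).
by rewrite big1 // => j jG; rewrite mnm1E; case: eqP => // ji; rewrite -ji jG in iG.
Qed.

Lemma path_cover_neq0 (C : {set 'I_n}) : path_cover t C -> C != set0.
Proof. by move/(_ 0 (ltn_addl _ (ltnSn 0))); apply: contraNneq => ->; rewrite set0I. Qed.

Lemma path_window_neq0 : 0 < t -> t <= n ->
  forall W : {set 'I_n}, path_window t W -> W != set0.
Proof.
move=> t_gt0 tn W [i lti ->]; have ltin : i < n by lia.
by apply/set0Pn; exists (Ordinal ltin); rewrite inE /=; lia.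
Qed.

Lemma path_idealE : @path_ideal K n t = gen_ideal (path_gen t).
Proof.
congr ideal_gen; apply: pset_ext => p; split.
- by case=> i [lti ->]; exists (mnm_of_set (path_supp n t i)); [exists i | rewrite xmonE].
- by case=> _ [i lti ->] ->; exists i; rewrite xmonE.
Qed.

Lemma path_ideal_dualE : @path_ideal_dual K n t = gen_ideal (cover_gen t).
Proof.
congr ideal_gen; apply: pset_ext => p; split.
- by case=> C [covC ->]; exists (mnm_of_set C); [exists C | rewrite xmonE].
- by case=> _ [C covC ->] ->; exists C; rewrite xmonE.
Qed.

End PathIdeals.

Theorem theorem2p3 (K : fieldType) (n t : nat) :
  (1 <= t)%N -> (t <= n)%N ->
  normally_torsion_free (@path_ideal K n t) /\
  normally_torsion_free (@path_ideal_dual K n t).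
Proof.
move=> t_gt0 tn; split.
- apply: ntf_of_power_decomp (@path_cover_neq0 n t) _ (path_idealE K n t).
  exact: path_pow_decomp.
- apply: ntf_of_power_decomp (path_window_neq0 t_gt0 tn) _ (path_ideal_dualE K n t).
  by move=> s m; apply: dual_pow_decomp.
Qed.
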